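(* Any two countable dense subsets of the Urysohn space $\mathbb U$ are almost isometric.
   Context: $\mathbb U$ denotes Urysohn's universal separable metric space: the unique (up to isometry) complete separable metric space such that for every finite metric space $F=\{x_0,\dots,x_n\}$, every isometry $\{x_0,\dots,x_{n-1}\}\to\mathbb U$ extends to an isometry $F\to\mathbb U$. For $\lambda>1$, an injection $f$ is $\lambda$-bi-Lipschitz if for all distinct $a,b$ in its domain $d(f(a),f(b))<\lambda d(a,b)$ and $d(a,b)<\lambda d(f(a),f(b))$. Two metric spaces $X,Y$ are almost isometric if for every $\lambda>1$ there is a $\lambda$-bi-Lipschitz bijection from $X$ onto $Y$. *)

From Stdlib Require Import Reals.
Open Scope R_scope.

Definition is_metric {U : Type} (d : U -> U -> R) : Prop :=
  (forall x y, 0 <= d x y) /\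
  (forall x y, d x y = 0 <-> x = y) /\
  (forall x y, d x y = d y x) /\
  (forall x y z, d x z <= d x y + d y z).

Definition cauchy_seq {U : Type} (d : U -> U -> R) (u : nat -> U) : Prop :=
  forall eps, 0 < eps -> exists N, forall m n, (N <= m)%nat -> (N <= n)%nat ->
    d (u m) (u n) < eps.

Definition converges_to {U : Type} (d : U -> U -> R) (u : nat -> U) (l : U) : Prop :=
  forall eps, 0 < eps -> exists N, forall n, (N <= n)%nat -> d (u n) l < eps.

Definition complete_metric {U : Type} (d : U -> U -> R) : Prop :=
  forall u, cauchy_seq d u -> exists l, converges_to d u l.

Definition countable_set {U : Type} (A : U -> Prop) : Prop :=
  exists g : {x : U | A x} -> nat, forall a b, g a = g b -> a = b.

Definition dense_set {U : Type} (d : U -> U -> R) (A : U -> Prop) : Prop :=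
  forall x eps, 0 < eps -> exists a, A a /\ d x a < eps.

Definition separable {U : Type} (d : U -> U -> R) : Prop :=
  exists A : U -> Prop, countable_set A /\ dense_set d A.

(* A finite metric space F = {x_0, ..., x_n}, points indexed by 0..n. *)
Definition finite_metric (n : nat) (dF : nat -> nat -> R) : Prop :=
  (forall i j, (i <= n)%nat -> (j <= n)%nat -> 0 <= dF i j) /\
  (forall i j, (i <= n)%nat -> (j <= n)%nat -> (dF i j = 0 <-> i = j)) /\
  (forall i j, (i <= n)%nat -> (j <= n)%nat -> dF i j = dF j i) /\
  (forall i j k, (i <= n)%nat -> (j <= n)%nat -> (k <= n)%nat ->
      dF i k <= dF i j + dF j k).

Definition urysohn_extension {U : Type} (d : U -> U -> R) : Prop :=
  forall (n : nat) (dF : nat -> nat -> R) (f : nat -> U),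
    finite_metric n dF ->
    (forall i j, (i < n)%nat -> (j < n)%nat -> d (f i) (f j) = dF i j) ->
    exists g : nat -> U,
      (forall i, (i < n)%nat -> g i = f i) /\
      (forall i j, (i <= n)%nat -> (j <= n)%nat -> d (g i) (g j) = dF i j).

Definition is_urysohn_space {U : Type} (d : U -> U -> R) : Prop :=
  is_metric d /\ complete_metric d /\ separable d /\ urysohn_extension d.

Definition bi_lipschitz {U : Type} (d : U -> U -> R) (A B : U -> Prop)
    (lam : R) (h : {x : U | A x} -> {x : U | B x}) : Prop :=
  forall a b, a <> b ->
    d (proj1_sig (h a)) (proj1_sig (h b)) < lam * d (proj1_sig a) (proj1_sig b) /\
    d (proj1_sig a) (proj1_sig b) < lam * d (proj1_sig (h a)) (proj1_sig (h b)).

Definition almost_isometric {U : Type} (d : U -> U -> R) (A B : U -> Prop) : Prop :=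
  forall lam, 1 < lam ->
    exists h : {x : U | A x} -> {x : U | B x},
      (forall a b, h a = h b -> a = b) /\
      (forall b, exists a, h a = b) /\
      bi_lipschitz d A B lam h.

(* Back and forth.  A finite partial map from A to B that is strictly
   lam-bi-Lipschitz extends to any new point a of A: if mu < lam bounds its
   distortion, the distances g(b_q) = min_j (mu d(a, a_j) + d(b_q, b_j)) to the
   images b_q of the points a_q form a Katetov function, which the extension
   property realizes at some u in U.  These distances lie strictly within a
   factor lam of d(a, a_q), so every point of the dense set B close enough to u
   is an admissible image of a.  Symmetrically one extends the inverse map, and
   alternating along enumerations of A and B builds an increasing chain of
   finite partial maps whose union is a lam-bi-Lipschitz bijection. *)

From Stdlib Require Import Reals Lra Lia List RList ClassicalEpsilon ProofIrrelevance.
Open Scope R_scope.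

Lemma MinRlist_In (l : list R) : l <> nil -> In (MinRlist l) l.
Proof.
  induction l as [|x [|y l] IH]; intros Hl; [contradiction| left; reflexivity|].
  change (In (Rmin x (MinRlist (y :: l))) (x :: y :: l)).
  destruct (Rle_dec x (MinRlist (y :: l))).
  - rewrite Rmin_left by assumption. left; reflexivity.
  - rewrite Rmin_right by lra. right. apply IH. discriminate.
Qed.

Lemma Rdiv_lt_iff (x y c : R) : 0 < c -> x / c < y <-> x < c * y.
Proof.
  intros Hc. assert (E : x / c * c = x) by (field; lra). split; intro H; nra.
Qed.

Definition metric_on {X : Type} (P : X -> Prop) (delta : X -> X -> R) : Prop :=
  forall x y z, P x -> P y -> P z ->
    0 <= delta x y /\ (delta x y = 0 <-> x = y) /\ delta x y = delta y x /\
    delta x z <= delta x y + delta y z.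

Lemma finite_metric_pullback {X : Type} (P : X -> Prop) (delta : X -> X -> R)
    (n : nat) (e : nat -> X) :
  metric_on P delta ->
  (forall i, (i <= n)%nat -> P (e i)) ->
  (forall i j, (i <= n)%nat -> (j <= n)%nat -> e i = e j -> i = j) ->
  finite_metric n (fun i j => delta (e i) (e j)).
Proof.
  intros Hdelta HP He.
  split; [|split; [|split]].
  - intros i j Hi Hj. apply (Hdelta _ _ (e i)); auto.
  - intros i j Hi Hj. destruct (Hdelta (e i) (e j) (e i)) as (_ & Hz & _); auto.
    rewrite Hz. split; [apply He; auto | intros ->; reflexivity].
  - intros i j Hi Hj. apply (Hdelta _ _ (e i)); auto.
  - intros i j k Hi Hj Hk. apply (Hdelta _ _ (e k)); auto.
Qed.

Section Katetov.

Context {U : Type} (d : U -> U -> R).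
Hypothesis Hd : is_metric d.

Lemma dist_refl (x : U) : d x x = 0.
Proof. apply Hd. reflexivity. Qed.

Lemma dist_pos (x y : U) : x <> y -> 0 < d x y.
Proof.
  intros Hxy. destruct (proj1 Hd x y) as [|E]; [assumption|].
  exfalso. apply Hxy, Hd. symmetry. exact E.
Qed.

Lemma strict_dist_bounds_near {X : Type} (pts : list X) (pt : X -> U) (lo hi : X -> R) (u : U) :
  (forall q, In q pts -> lo q < d u (pt q) < hi q) ->
  exists eps, 0 < eps /\
    forall y, d u y < eps -> forall q, In q pts -> lo q < d y (pt q) < hi q.
Proof.
  destruct Hd as (_ & _ & Hsym & Htri). intros Hu.
  set (slack := fun q => Rmin (d u (pt q) - lo q) (hi q - d u (pt q))).
  exists (MinRlist (map slack pts)). split.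
  - apply MinRlist_P2. intros s Hs. apply in_map_iff in Hs as [q [<- Hq]].
    destruct (Hu q Hq). apply Rmin_glb_lt; lra.
  - intros y Hy q Hq.
    assert (Hslack : MinRlist (map slack pts) <= slack q) by (apply MinRlist_P1, in_map, Hq).
    pose proof (Rmin_l (d u (pt q) - lo q) (hi q - d u (pt q))).
    pose proof (Rmin_r (d u (pt q) - lo q) (hi q - d u (pt q))).
    pose proof (Htri y u (pt q)). pose proof (Htri u y (pt q)). rewrite (Hsym y u) in *.
    unfold slack in Hy, Hslack. split; lra.
Qed.

(* [None] is the new point, at distance [g x] from each [x]. *)
Definition katetov_dist (g : U -> R) (x y : option U) : R :=
  match x, y with
  | Some x, Some y => d x y
  | Some x, None => g x
  | None, Some y => g y
  | None, None => 0
  end.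

Definition katetov_function (xs : list U) (g : U -> R) : Prop :=
  (forall x, In x xs -> 0 < g x) /\
  (forall x y, In x xs -> In y xs -> g x <= d x y + g y) /\
  (forall x y, In x xs -> In y xs -> d x y <= g x + g y).

Lemma katetov_dist_metric (xs : list U) (g : U -> R) :
  katetov_function xs g ->
  metric_on (fun o => match o with Some x => In x xs | None => True end)
            (katetov_dist g).
Proof.
  destruct Hd as (Hpos & Hzero & Hsym & Htri).
  intros (Hg & Hlip & Hsum) [x|] [y|] [z|] Hx Hy Hz; simpl; repeat split;
    try lra; try solve [left; auto]; try apply Hpos; try apply Hsym; try apply Htri.
  all: try solve [intro E; discriminate E].
  all: try solve [intro E; injection E as ->; apply Hzero; reflexivity].
  all: try solve [intro E; f_equal; apply Hzero, E].
  all: try solve [intro E; exfalso; first [pose proof (Hg _ Hx) | pose proof (Hg _ Hy)]; lra].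
  - apply Hlip; assumption.
  - apply Hsum; assumption.
  - rewrite (Hsym y z). pose proof (Hlip z y Hz Hy). lra.
  - pose proof (Hg _ Hy). lra.
Qed.

Hypothesis Hext : urysohn_extension d.

(* [x0] only serves as a default for [nth]; it makes [U] inhabited when [xs] is empty. *)
Lemma katetov_realized (x0 : U) (xs : list U) (g : U -> R) :
  katetov_function xs g -> exists u, forall x, In x xs -> d u x = g x.
Proof.
  intros Hg.
  (* The points of a finite metric space are pairwise distinct. *)
  set (ys := nodup (fun x y : U => excluded_middle_informative (x = y)) xs).
  set (n := length ys).
  set (pt := fun i => nth i ys x0).
  set (opt := fun i => if Nat.ltb i n then Some (pt i) else None).
  assert (Hys : forall x, In x ys <-> In x xs) by apply nodup_In.
  assert (Hopt_lt : forall i, (i < n)%nat -> opt i = Some (pt i)).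
  { intros i Hi. unfold opt. rewrite (proj2 (Nat.ltb_lt i n) Hi). reflexivity. }
  assert (Hopt_n : opt n = None) by (unfold opt; rewrite Nat.ltb_irrefl; reflexivity).
  destruct (Hext n (fun i j => katetov_dist g (opt i) (opt j)) pt) as [f [Hf Hfd]].
  - apply finite_metric_pullback
      with (P := fun o => match o with Some x => In x xs | None => True end).
    + apply katetov_dist_metric. exact Hg.
    + intros i Hi. destruct (Nat.eq_dec i n) as [->|Hne]; [rewrite Hopt_n; exact I|].
      rewrite Hopt_lt by lia. apply Hys, nth_In. lia.
    + intros i j Hi Hj E.
      destruct (Nat.eq_dec i n) as [->|Hin], (Nat.eq_dec j n) as [->|Hjn]; [reflexivity| | |].
      * rewrite Hopt_n, Hopt_lt in E by lia. discriminate.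
      * rewrite Hopt_n, Hopt_lt in E by lia. discriminate.
      * rewrite !Hopt_lt in E by lia. injection E as E.
        apply (proj1 (NoDup_nth ys x0) (NoDup_nodup _ xs)); unfold n in *; [lia|lia|exact E].
  - intros i j Hi Hj. rewrite !Hopt_lt by assumption. reflexivity.
  - exists (f n). intros x Hx.
    destruct (In_nth ys x x0 (proj2 (Hys x) Hx)) as [i [Hi <-]]. fold (pt i).
    replace (pt i) with (f i) at 1 by (apply Hf; exact Hi).
    rewrite Hfd by lia. rewrite Hopt_n, Hopt_lt by assumption. reflexivity.
Qed.

End Katetov.

Section InfConvolution.

Context {U : Type} (d : U -> U -> R).
Hypothesis Hd : is_metric d.
Context {X : Type}.
Variables (pts : list X) (pt : X -> U) (h : X -> R).

(* The largest 1-Lipschitz function lying below [h q] at each point [pt q]. *)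
Definition inf_convolution (y : U) : R := MinRlist (map (fun q => h q + d y (pt q)) pts).

Lemma inf_convolution_le (q : X) (y : U) : In q pts -> inf_convolution y <= h q + d y (pt q).
Proof.
  intros Hq. apply MinRlist_P1. apply (in_map (fun q => h q + d y (pt q))). exact Hq.
Qed.

Lemma inf_convolution_attained (y : U) :
  pts <> nil -> exists q, In q pts /\ inf_convolution y = h q + d y (pt q).
Proof.
  intros Hpts.
  assert (Hne : map (fun q => h q + d y (pt q)) pts <> nil) by (destruct pts; easy).
  apply MinRlist_In, in_map_iff in Hne as [q [Hq Hin]].
  exists q. split; [exact Hin | symmetry; exact Hq].
Qed.

Hypothesis Hpts : pts <> nil.

Lemma inf_convolution_lipschitz (y z : U) : inf_convolution y <= d y z + inf_convolution z.
Proof.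
  destruct Hd as (_ & _ & _ & Htri).
  destruct (inf_convolution_attained z Hpts) as [q [Hq ->]].
  pose proof (inf_convolution_le q y Hq). pose proof (Htri y z (pt q)). lra.
Qed.

Lemma inf_convolution_sum (y z : U) :
  (forall q q', In q pts -> In q' pts -> d (pt q) (pt q') <= h q + h q') ->
  d y z <= inf_convolution y + inf_convolution z.
Proof.
  destruct Hd as (_ & _ & Hsym & Htri). intros Hh.
  destruct (inf_convolution_attained y Hpts) as [q [Hq ->]].
  destruct (inf_convolution_attained z Hpts) as [q' [Hq' ->]].
  pose proof (Hh q q' Hq Hq'). pose proof (Htri y (pt q) z). pose proof (Htri (pt q) (pt q') z).
  rewrite (Hsym (pt q') z) in *. lra.
Qed.

End InfConvolution.

Section PartialIsometries.

Context {U : Type} (d : U -> U -> R).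
Hypothesis Hd : is_metric d.
Variable lam : R.
Hypothesis Hlam : 1 < lam.

Definition bilipschitz_pair (p q : U * U) : Prop :=
  d (snd p) (snd q) < lam * d (fst p) (fst q) /\ d (fst p) (fst q) < lam * d (snd p) (snd q).

(* Distinct pairs of such a graph have distinct coordinates, so it is the graph of an
   injective partial map. *)
Definition bilipschitz_graph (A B : U -> Prop) (G : U * U -> Prop) : Prop :=
  (forall p, G p -> A (fst p) /\ B (snd p)) /\
  (forall p q, G p -> G q -> p <> q -> bilipschitz_pair p q).

Lemma bilipschitz_pair_sym (p q : U * U) : bilipschitz_pair p q -> bilipschitz_pair q p.
Proof.
  destruct Hd as (_ & _ & Hsym & _). unfold bilipschitz_pair.
  rewrite (Hsym (snd q)), (Hsym (fst q)). tauto.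
Qed.

Lemma bilipschitz_pair_dist_pos (p q : U * U) :
  bilipschitz_pair p q -> 0 < d (fst p) (fst q) /\ 0 < d (snd p) (snd q).
Proof.
  destruct Hd as (Hpos & _). intros [H1 H2].
  pose proof (Hpos (fst p) (fst q)). pose proof (Hpos (snd p) (snd q)).
  assert (0 < lam) by lra. split; nra.
Qed.

Definition swap (p : U * U) : U * U := (snd p, fst p).

Lemma swap_involutive (p : U * U) : swap (swap p) = p.
Proof. destruct p; reflexivity. Qed.

Lemma In_map_swap (l : list (U * U)) (p : U * U) : In p (map swap l) <-> In (swap p) l.
Proof.
  rewrite in_map_iff. destruct p as [x y]. split.
  - intros [[x' y'] [E Hin]]. injection E as -> ->. exact Hin.
  - intros Hin. exists (y, x). split; [reflexivity | exact Hin].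
Qed.

Lemma bilipschitz_graph_swap (A B : U -> Prop) (l : list (U * U)) :
  bilipschitz_graph A B (fun p => In p l) -> bilipschitz_graph B A (fun p => In p (map swap l)).
Proof.
  intros [Hmem Hlip]. split.
  - intros p Hp%In_map_swap. apply Hmem in Hp. simpl in Hp. tauto.
  - intros p q Hp%In_map_swap Hq%In_map_swap Hpq.
    assert (Hne : swap p <> swap q) by (destruct p, q; intro E; injection E as -> ->; auto).
    destruct (Hlip _ _ Hp Hq Hne). split; assumption.
Qed.

Lemma bilipschitz_graph_ratio_bound (A B : U -> Prop) (l : list (U * U)) :
  bilipschitz_graph A B (fun p => In p l) ->
  exists mu, 1 <= mu < lam /\
    forall p q, In p l -> In q l -> d (snd p) (snd q) <= mu * d (fst p) (fst q).
Proof.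
  intros [_ Hlip].
  (* With [r / 0 = 0], the diagonal pairs contribute the harmless ratio [0]. *)
  set (ratio := fun pq : (U * U) * (U * U) =>
    d (snd (fst pq)) (snd (snd pq)) / d (fst (fst pq)) (fst (snd pq))).
  set (ratios := 1 :: map ratio (list_prod l l)).
  assert (Hratio : forall p q, In p l -> In q l -> In (ratio (p, q)) ratios).
  { intros p q Hp Hq. right. apply in_map, in_prod; assumption. }
  exists (MaxRlist ratios). split; [split|].
  - apply MaxRlist_P1. left. reflexivity.
  - destruct (MaxRlist_P2 ratios (ex_intro _ 1 (or_introl eq_refl))) as [<-|Hin]; [exact Hlam|].
    apply in_map_iff in Hin as [[p q] [<- Hpq%in_prod_iff]].
    destruct (classic (p = q)) as [<-|Hne].
    + unfold ratio; simpl. rewrite !dist_refl by exact Hd. rewrite Rdiv_0_r. lra.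
    + destruct Hpq as [Hp Hq]. pose proof (Hlip p q Hp Hq Hne) as Hb.
      apply bilipschitz_pair_dist_pos in Hb as Hb'. apply Rdiv_lt_iff; [apply Hb'|].
      simpl. rewrite Rmult_comm. apply Hb.
  - intros p q Hp Hq. pose proof (MaxRlist_P1 ratios _ (Hratio p q Hp Hq)) as Hmax.
    destruct (classic (p = q)) as [<-|Hne].
    + rewrite !dist_refl by exact Hd. lra.
    + destruct (bilipschitz_pair_dist_pos p q (Hlip p q Hp Hq Hne)) as [Ha _].
      unfold ratio in Hmax; cbn [fst snd] in Hmax.
      replace (d (snd p) (snd q)) with (d (snd p) (snd q) / d (fst p) (fst q) * d (fst p) (fst q))
        by (field; lra).
      apply Rmult_le_compat_r; lra.
Qed.

End PartialIsometries.

Section Extension.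

Context {U : Type} (d : U -> U -> R).
Hypothesis Hd : is_metric d.
Hypothesis Hext : urysohn_extension d.
Variable lam : R.
Hypothesis Hlam : 1 < lam.

Lemma bilipschitz_graph_katetov_target (A B : U -> Prop) (l : list (U * U)) (a : U) :
  bilipschitz_graph d lam A B (fun p => In p l) -> (forall p, In p l -> fst p <> a) ->
  exists g, katetov_function d (map snd l) g /\
    forall q, In q l -> d a (fst q) < lam * g (snd q) /\ g (snd q) < lam * d a (fst q).
Proof.
  pose proof Hd as (Hpos & _ & Hsym & Htri).
  intros Hl Hnew.
  destruct (bilipschitz_graph_ratio_bound d Hd lam Hlam A B l Hl) as [mu [[Hmu1 Hmu2] Hmu]].
  assert (Hlm : 1 < lam * mu) by nra.
  set (h := fun q : U * U => mu * d a (fst q)).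
  assert (Ha_pos : forall q, In q l -> 0 < d a (fst q)).
  { intros q Hq. apply (dist_pos d Hd). intros E. apply (Hnew q Hq). symmetry. exact E. }
  assert (Hl_nil : forall q, In q l -> l <> nil) by (intros q Hq ->; contradiction).
  assert (Hg : forall q, In q l ->
    d a (fst q) < lam * inf_convolution d l snd h (snd q) /\
    inf_convolution d l snd h (snd q) < lam * d a (fst q)).
  { intros q Hq. pose proof (Ha_pos q Hq). split.
    - destruct (inf_convolution_attained d l snd h (snd q) (Hl_nil q Hq)) as [q' [Hq' ->]].
      unfold h. pose proof (Ha_pos q' Hq'). pose proof (Hpos (snd q) (snd q')).
      destruct (classic (q = q')) as [<-|Hne].
      + rewrite (dist_refl d Hd). nra.
      + destruct (proj2 Hl q q' Hq Hq' Hne) as [_ Hb].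
        pose proof (Htri a (fst q') (fst q)). rewrite (Hsym (fst q') (fst q)) in *. nra.
    - pose proof (inf_convolution_le d l snd h q (snd q) Hq) as Hle.
      rewrite (dist_refl d Hd) in Hle. unfold h in *. nra. }
  exists (inf_convolution d l snd h). split; [split; [|split] | exact Hg].
  - intros y [q [<- Hq]]%in_map_iff. destruct (Hg q Hq). pose proof (Ha_pos q Hq). nra.
  - intros y z [q [_ Hq]]%in_map_iff _.
    exact (inf_convolution_lipschitz d Hd _ _ _ (Hl_nil q Hq) y z).
  - intros y z [q [_ Hq]]%in_map_iff _. apply (inf_convolution_sum d Hd _ _ _ (Hl_nil q Hq)).
    intros p p' Hp Hp'. pose proof (Hmu p p' Hp Hp'). unfold h.
    pose proof (Htri (fst p) a (fst p')). rewrite (Hsym (fst p) a) in *.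
    pose proof (Hpos (fst p) (fst p')). nra.
Qed.

Lemma bilipschitz_graph_extend_new (A B : U -> Prop) (l : list (U * U)) (a : U) :
  dense_set d B -> bilipschitz_graph d lam A B (fun p => In p l) -> A a ->
  (forall p, In p l -> fst p <> a) ->
  exists b, bilipschitz_graph d lam A B (fun p => In p ((a, b) :: l)).
Proof.
  intros HB Hl Ha Hnew.
  destruct (bilipschitz_graph_katetov_target A B l a Hl Hnew) as [g [Hkat Hg]].
  destruct (katetov_realized d Hd Hext a (map snd l) g Hkat) as [u Hu].
  destruct (strict_dist_bounds_near d Hd l snd (fun q => d a (fst q) / lam)
              (fun q => lam * d a (fst q)) u) as [eps [Heps Hnear]].
  { intros q Hq. rewrite Hu by (apply in_map, Hq). destruct (Hg q Hq).
    split; [apply Rdiv_lt_iff; [lra | assumption] | assumption]. }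
  destruct (HB u eps Heps) as [b [Hb Hub]].
  assert (Hnew_pair : forall q, In q l -> bilipschitz_pair d lam (a, b) q).
  { intros q Hq. destruct (Hnear b Hub q Hq) as [Hlo Hhi].
    apply Rdiv_lt_iff in Hlo; [|lra]. split; assumption. }
  exists b. split.
  - intros p [<-|Hp]; [split; assumption | apply Hl, Hp].
  - intros p q [<-|Hp] [<-|Hq] Hpq.
    + contradiction.
    + apply Hnew_pair, Hq.
    + apply (bilipschitz_pair_sym d Hd), Hnew_pair, Hp.
    + apply Hl; assumption.
Qed.

Lemma bilipschitz_graph_extend_dom (A B : U -> Prop) (l : list (U * U)) (a : U) :
  dense_set d B -> bilipschitz_graph d lam A B (fun p => In p l) -> A a ->
  exists l', bilipschitz_graph d lam A B (fun p => In p l') /\ incl l l' /\ exists b, In (a, b) l'.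
Proof.
  intros HB Hl Ha.
  destruct (classic (exists p, In p l /\ fst p = a)) as [[[x b] [Hp E]]|Hnew].
  - exists l. split; [exact Hl | split; [apply incl_refl|]].
    exists b. simpl in E. subst x. exact Hp.
  - destruct (bilipschitz_graph_extend_new A B l a HB Hl Ha) as [b Hb].
    { intros p Hp E. apply Hnew. exists p. split; assumption. }
    exists ((a, b) :: l). split; [exact Hb | split].
    + apply incl_tl, incl_refl.
    + exists b. left. reflexivity.
Qed.

Lemma bilipschitz_graph_extend_ran (A B : U -> Prop) (l : list (U * U)) (b : U) :
  dense_set d A -> bilipschitz_graph d lam A B (fun p => In p l) -> B b ->
  exists l', bilipschitz_graph d lam A B (fun p => In p l') /\ incl l l' /\ exists a, In (a, b) l'.
Proof.
  intros HA Hl Hb.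
  destruct (bilipschitz_graph_extend_dom B A (map swap l) b HA
              (bilipschitz_graph_swap d lam A B l Hl) Hb) as [l' [Hl' [Hincl [a Ha]]]].
  exists (map swap l'). split; [|split].
  - exact (bilipschitz_graph_swap d lam B A l' Hl').
  - intros p Hp. apply In_map_swap, Hincl, In_map_swap. rewrite swap_involutive. exact Hp.
  - exists a. apply In_map_swap. exact Ha.
Qed.

Lemma bilipschitz_graph_extend_both (A B : U -> Prop) (l : list (U * U)) (oa ob : option U) :
  dense_set d A -> dense_set d B -> bilipschitz_graph d lam A B (fun p => In p l) ->
  (forall x, oa = Some x -> A x) -> (forall y, ob = Some y -> B y) ->
  exists l', bilipschitz_graph d lam A B (fun p => In p l') /\ incl l l' /\
    (forall x, oa = Some x -> exists y, In (x, y) l') /\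
    (forall y, ob = Some y -> exists x, In (x, y) l').
Proof.
  intros HA HB Hl HoA HoB.
  assert (Hdom : exists l1, bilipschitz_graph d lam A B (fun p => In p l1) /\ incl l l1 /\
                   forall x, oa = Some x -> exists y, In (x, y) l1).
  { destruct oa as [x|].
    - destruct (bilipschitz_graph_extend_dom A B l x HB Hl (HoA x eq_refl))
        as [l1 (Hl1 & Hincl & y & Hy)].
      exists l1. split; [exact Hl1 | split; [exact Hincl|]].
      intros x' E. injection E as <-. exists y. exact Hy.
    - exists l. split; [exact Hl | split; [apply incl_refl | discriminate]]. }
  destruct Hdom as [l1 (Hl1 & Hincl1 & Hcov1)].
  destruct ob as [y|].
  - destruct (bilipschitz_graph_extend_ran A B l1 y HA Hl1 (HoB y eq_refl))
      as [l2 (Hl2 & Hincl2 & x & Hx)].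
    exists l2. split; [exact Hl2 | split; [eapply incl_tran; eauto | split]].
    + intros x' E. destruct (Hcov1 x' E) as [y' Hy']. exists y'. apply Hincl2, Hy'.
    + intros y' E. injection E as <-. exists x. exact Hx.
  - exists l1. split; [exact Hl1 | split; [exact Hincl1 | split; [exact Hcov1 | discriminate]]].
Qed.

End Extension.

Lemma dependent_choice_seq {X : Type} (P : X -> Prop) (Rel : nat -> X -> X -> Prop) (x0 : X) :
  P x0 -> (forall k x, P x -> exists y, P y /\ Rel k x y) ->
  exists f : nat -> X, forall k, P (f k) /\ Rel k (f k) (f (S k)).
Proof.
  intros H0 Hstep.
  destruct (choice (fun (kx : nat * X) y => P (snd kx) -> P y /\ Rel (fst kx) (snd kx) y))
    as [next Hnext].
  { intros [k x]. destruct (classic (P x)) as [Hx|Hx].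
    - destruct (Hstep k x Hx) as [y Hy]. exists y. intros _. exact Hy.
    - exists x. intros Hx'. contradiction. }
  set (f := fix f k := match k with O => x0 | S k => next (k, f k) end).
  assert (Hf : forall k, P (f k)) by (induction k; [exact H0 | apply (Hnext (k, f k)), IHk]).
  exists f. intros k. split; [apply Hf | apply (Hnext (k, f k)), Hf].
Qed.

Lemma countable_enumeration {U : Type} (A : U -> Prop) :
  countable_set A ->
  exists e : nat -> option U,
    (forall k x, e k = Some x -> A x) /\ (forall x, A x -> exists k, e k = Some x).
Proof.
  intros [g Hg].
  destruct (choice (fun k (o : option U) =>
    (forall s, g s = k -> o = Some (proj1_sig s)) /\ (forall x, o = Some x -> A x))) as [e He].
  { intros k. destruct (classic (exists s, g s = k)) as [[s Hs]|Hn].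
    - exists (Some (proj1_sig s)). split.
      + intros s' Hs'. rewrite (Hg s s') by congruence. reflexivity.
      + intros x E. injection E as <-. apply proj2_sig.
    - exists None. split; [intros s Hs; exfalso; eauto | discriminate]. }
  exists e. split.
  - intros k. apply He.
  - intros x Hx. exists (g (exist A x Hx)). exact (proj1 (He _) (exist A x Hx) eq_refl).
Qed.

Section BackAndForth.

Context {U : Type} (d : U -> U -> R).
Hypothesis Hd : is_metric d.
Variable lam : R.
Hypothesis Hlam : 1 < lam.

Lemma bilipschitz_graph_chain_union (A B : U -> Prop) (L : nat -> list (U * U)) :
  (forall k, bilipschitz_graph d lam A B (fun p => In p (L k))) ->
  (forall k, incl (L k) (L (S k))) ->
  bilipschitz_graph d lam A B (fun p => exists k, In p (L k)).
Proof.
  intros HL Hincl.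
  assert (Hmono : forall k m, (k <= m)%nat -> incl (L k) (L m)).
  { intros k m Hkm. induction Hkm; [apply incl_refl | eapply incl_tran; eauto]. }
  split.
  - intros p [k Hp]. apply (HL k), Hp.
  - intros p q [k Hp] [m Hq]. apply (HL (Nat.max k m)).
    + apply (Hmono k); [lia | exact Hp].
    + apply (Hmono m); [lia | exact Hq].
Qed.

Lemma almost_isometry_of_total_graph (A B : U -> Prop) (G : U * U -> Prop) :
  bilipschitz_graph d lam A B G ->
  (forall x, A x -> exists y, G (x, y)) -> (forall y, B y -> exists x, G (x, y)) ->
  exists h : {x : U | A x} -> {y : U | B y},
    (forall a b, h a = h b -> a = b) /\ (forall b, exists a, h a = b) /\
    bi_lipschitz d A B lam h.
Proof.
  intros [Hmem Hlip] Htot Hsurj.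
  assert (Hsig : forall (P : U -> Prop) (s t : {x | P x}), proj1_sig s = proj1_sig t -> s = t)
    by (intros P; apply eq_sig_hprop; intros; apply proof_irrelevance).
  assert (Hgraph_eq : forall p q, G p -> G q -> fst p = fst q \/ snd p = snd q -> p = q).
  { intros p q Hp Hq E. apply NNPP. intros Hpq.
    destruct (bilipschitz_pair_dist_pos d Hd lam Hlam p q (Hlip p q Hp Hq Hpq)) as [H1 H2].
    destruct E as [E|E]; rewrite E, (dist_refl d Hd) in *; lra. }
  destruct (choice (fun (s : {x | A x}) (t : {y | B y}) => G (proj1_sig s, proj1_sig t)))
    as [h Hh].
  { intros [x Hx]. destruct (Htot x Hx) as [y Hy].
    exists (exist B y (proj2 (Hmem _ Hy))). exact Hy. }
  exists h. split; [|split].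
  - intros s t Hst. apply Hsig.
    assert (E := Hgraph_eq _ _ (Hh s) (Hh t) (or_intror (f_equal (@proj1_sig _ _) Hst))).
    injection E as E _. exact E.
  - intros [y Hy]. destruct (Hsurj y Hy) as [x Hx].
    exists (exist A x (proj1 (Hmem _ Hx))). apply Hsig.
    assert (E := Hgraph_eq _ _ (Hh (exist A x (proj1 (Hmem _ Hx)))) Hx (or_introl eq_refl)).
    injection E as E. exact E.
  - intros s t Hst. apply (Hlip _ _ (Hh s) (Hh t)).
    intros E. injection E as E _. apply Hst, Hsig, E.
Qed.

End BackAndForth.

Lemma back_and_forth {U : Type} (d : U -> U -> R) (lam : R) (A B : U -> Prop) :
  is_metric d -> urysohn_extension d -> 1 < lam ->
  countable_set A -> dense_set d A -> countable_set B -> dense_set d B ->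
  exists G, bilipschitz_graph d lam A B G /\
    (forall x, A x -> exists y, G (x, y)) /\ (forall y, B y -> exists x, G (x, y)).
Proof.
  intros Hd Hext Hlam HcA HA HcB HB.
  destruct (countable_enumeration A HcA) as [eA [HeA HeA_onto]].
  destruct (countable_enumeration B HcB) as [eB [HeB HeB_onto]].
  destruct (dependent_choice_seq (fun l => bilipschitz_graph d lam A B (fun p => In p l))
    (fun k l l' => incl l l' /\ (forall x, eA k = Some x -> exists y, In (x, y) l') /\
                   (forall y, eB k = Some y -> exists x, In (x, y) l')) nil) as [L HL].
  - split; [intros ? [] | intros ? ? []].
  - intros k l Hl. apply (bilipschitz_graph_extend_both d Hd Hext lam Hlam); auto.
    + apply HeA.
    + apply HeB.
  - exists (fun p => exists k, In p (L k)). split; [|split].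
    + apply bilipschitz_graph_chain_union; intros k; apply HL.
    + intros x Hx. destruct (HeA_onto x Hx) as [k Ek].
      destruct (HL k) as (_ & _ & Hcov & _).
      destruct (Hcov x Ek) as [y Hy]. exists y, (S k). exact Hy.
    + intros y Hy. destruct (HeB_onto y Hy) as [k Ek].
      destruct (HL k) as (_ & _ & _ & Hcov).
      destruct (Hcov y Ek) as [x Hx]. exists x, (S k). exact Hx.
Qed.

Theorem theorem3p6 (U : Type) (d : U -> U -> R) :
  is_urysohn_space d ->
  forall A B : U -> Prop,
    countable_set A -> dense_set d A ->
    countable_set B -> dense_set d B ->
    almost_isometric d A B.
Proof.
  intros (Hd & _ & _ & Hext) A B HcA HA HcB HB lam Hlam.
  destruct (back_and_forth d lam A B Hd Hext Hlam HcA HA HcB HB) as [G (HG & Htot & Hsurj)].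
  exact (almost_isometry_of_total_graph d Hd lam Hlam A B G HG Htot Hsurj).
Qed.
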